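(* Let $\mathcal L=(\Sigma,X)$ be a language, $\Lambda$ a fuzzy theory in $\mathcal L$ and $\Gamma$ a set of formulas of $\mathcal L$. Let $\Lambda[\Gamma]=\Lambda\cup\{\emptyset\vdash\phi\mid\phi\in\Gamma\}$. Then for every set of formulas $\Delta$ and formula $\psi$: (1) if $(\Gamma\cup\Delta\vdash\psi)\in\Lambda^{\vdash}$ then $(\Delta\vdash\psi)\in(\Lambda[\Gamma])^{\vdash}$; (2) if $\Delta\vdash\psi$ is derivable from $\Lambda[\Gamma]$ without using rule (Sub) — i.e. it belongs to the smallest set of sequents containing $\Lambda[\Gamma]$ and closed under all rules of the calculus except (Sub) — then $(\Gamma\cup\Delta\vdash\psi)\in\Lambda^{\vdash}$.
   Context: $H$ is a frame with bottom $\bot$. A signature $\Sigma=(O,\mathrm{ar},C)$ consists of a set $O$ of operation symbols with arity $\mathrm{ar}:O\to\{1,2,3,\dots\}$ and a set $C$ of constant symbols. A language is a pair $\mathcal L=(\Sigma,X)$ with $X$ a set of variables. $\mathrm{Terms}(\mathcal L)$ is the smallest set containing $X\sqcup C$ and containing $f(t_1,\dots,t_{\mathrm{ar}(f)})$ whenever $f\in O$ and all $t_i\in\mathrm{Terms}(\mathcal L)$. A formula is either an equation $s\equiv t$ ($s,t$ terms) or a membership proposition $\mathsf E_l(t)$ with $l\in H$ and $t$ a term. A sequent $\Gamma\vdash\psi$ is a pair of a (possibly infinite) set $\Gamma$ of formulas and a formula $\psi$; $\vdash\psi$ means $\emptyset\vdash\psi$. A fuzzy theory in $\mathcal L$ is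 a set of sequents. For $\sigma:X\to\mathrm{Terms}(\mathcal L)$, $t[\sigma]$ is simultaneous substitution, extended to formulas by $(s\equiv t)[\sigma]=(s[\sigma]\equiv t[\sigma])$, $\mathsf E_l(t)[\sigma]=\mathsf E_l(t[\sigma])$, and to sets of formulas elementwise. The rules of the fuzzy sequent calculus are (for all sets of formulas $\Gamma,\Delta,\Phi$, formulas $\phi,\psi$, terms, $l,l'\in H$): (A) $\Gamma\vdash\phi$ if $\phi\in\Gamma$; (Weak) from $\Gamma\vdash\phi$ infer $\Gamma\cup\Delta\vdash\phi$; (Cut) from $\Gamma\vdash\phi$ for all $\phi\in\Phi$ and $\Phi\vdash\psi$ infer $\Gamma\vdash\psi$; (Refl) $\Gamma\vdash s\equiv s$; (Sym) from $\Gamma\vdash s\equiv t$ infer $\Gamma\vdash t\equiv s$; (Trans) from $\Gamma\vdash s\equiv t$ and $\Gamma\vdash t\equiv u$ infer $\Gamma\vdash s\equiv u$; (Sub) from $\Gamma\vdash\psi$ infer $\Gamma[\sigma]\vdash\psi[\sigma]$ for any $\sigma:X\to\mathrm{Terms}(\mathcal L)$; (Cong) for $f\in O$ with $n=\mathrm{ar}(f)$, from $\Gamma\vdash t_i\equiv s_i$ ($i=1,\dots,n$) infer $\Gamma\vdash f(t_1,\dots,t_n)\equiv f(s_1,\dots,s_n)$; (Inf) $\Gamma\vdash\mathsf E_\bot(t)$; (Mon) from $\Gamma\vdash\mathsf E_l(t)$ infer $\Gamma\vdash\mathsf E_{l\wedge l'}(t)$; (Exp) for $f\in O$ with $n=\mathrm{ar}(f)$,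 from $\Gamma\vdash\mathsf E_{l_i}(t_i)$ ($i=1,\dots,n$) infer $\Gamma\vdash\mathsf E_{l_1\wedge\dots\wedge l_n}(f(t_1,\dots,t_n))$; (Sup) for $S\subseteq H$, from $\Gamma\vdash\mathsf E_l(t)$ for all $l\in S$ infer $\Gamma\vdash\mathsf E_{\sup S}(t)$; (Fun) from $\Gamma\vdash t\equiv s$ and $\Gamma\vdash\mathsf E_l(t)$ infer $\Gamma\vdash\mathsf E_l(s)$. The deductive closure $\Lambda^{\vdash}$ of a theory $\Lambda$ is the smallest set of sequents containing $\Lambda$ and closed under all these rules. *)

From mathcomp Require Import all_boot.
Set Implicit Arguments.
Unset Strict Implicit.
Unset Printing Implicit Defensive.

Record frame := Frame {
  fcar :> Type;
  fle : fcar -> fcar -> Prop;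
  fmeet : fcar -> fcar -> fcar;
  fsup : (fcar -> Prop) -> fcar;
  fbot : fcar;
  fle_refl : forall x, fle x x;
  fle_trans : forall x y z, fle x y -> fle y z -> fle x z;
  fle_anti : forall x y, fle x y -> fle y x -> x = y;
  fmeet_l : forall x y, fle (fmeet x y) x;
  fmeet_r : forall x y, fle (fmeet x y) y;
  fmeet_glb : forall x y z, fle z x -> fle z y -> fle z (fmeet x y);
  fsup_ub : forall (S : fcar -> Prop) x, S x -> fle x (fsup S);
  fsup_lub : forall (S : fcar -> Prop) z, (forall x, S x -> fle x z) -> fle (fsup S) z;
  fbot_least : forall x, fle fbot x;
  fdistr : forall x (S : fcar -> Prop),
      fmeet x (fsup S) = fsup (fun y => exists2 s, S s & y = fmeet x s)
}.

Definition ftop (H : frame) : H := fsup (fun _ : H => True).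

(* finite meet l_1 /\ ... /\ l_n of a family indexed by 'I_n
   (for n >= 1 this is the iterated binary meet; top is only the neutral seed) *)
Definition fbigmeet (H : frame) (n : nat) (l : 'I_n -> H) : H :=
  foldr (@fmeet H) (ftop H) [seq l i | i <- enum 'I_n].

Record signature := Signature {
  op : Type;
  ar : op -> nat;
  ar_pos : forall f, 0 < ar f;
  const : Type
}.

Section Syntax.
Variable (H : frame) (Sg : signature) (X : Type).
Local Set Implicit Arguments.

Inductive term : Type :=
  | tvar : X -> term
  | tconst : const Sg -> term
  | tapp : forall f : op Sg, ('I_(ar f) -> term) -> term.


Fixpoint tsubst (s : X -> term) (t : term) : term :=
  match t with
  | tvar x => s x
  | tconst c => tconst c
  | tapp f ts => tapp (fun i => tsubst s (ts i))
  end.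

Inductive formula : Type :=
  | feq : term -> term -> formula
  | fE : fcar H -> term -> formula.

Definition fsubst (s : X -> term) (phi : formula) : formula :=
  match phi with
  | feq a b => feq (tsubst s a) (tsubst s b)
  | fE l a => fE l (tsubst s a)
  end.

Definition fset := formula -> Prop.
Definition sequent := (fset * formula)%type.
Definition theory := sequent -> Prop.

Definition fempty : fset := fun _ => False.
Definition funion (G D : fset) : fset := fun phi => G phi \/ D phi.
Definition fset_subst (s : X -> term) (G : fset) : fset :=
  fun phi => exists2 psi, G psi & phi = fsubst s psi.

Definition theory_add (Lam : theory) (G : fset) : theory :=
  fun sq => Lam sq \/ exists2 phi, G phi & sq = (fempty, phi).

(* Derivability.  [deriv true Lam] is the deductive closure Λ^⊢ (smallest set
   of sequents containing Λ closed under all rules); [deriv false Lam] is the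
   smallest set containing Λ closed under all rules except (Sub). *)
Inductive deriv (use_sub : bool) (Lam : theory) : sequent -> Prop :=
  | d_ax : forall sq, Lam sq -> deriv use_sub Lam sq
  | d_A : forall G phi, G phi -> deriv use_sub Lam (G, phi)
  | d_weak : forall G D phi, deriv use_sub Lam (G, phi) ->
      deriv use_sub Lam (funion G D, phi)
  | d_cut : forall G (P : fset) psi,
      (forall phi, P phi -> deriv use_sub Lam (G, phi)) ->
      deriv use_sub Lam (P, psi) -> deriv use_sub Lam (G, psi)
  | d_refl : forall G s, deriv use_sub Lam (G, feq s s)
  | d_sym : forall G s t, deriv use_sub Lam (G, feq s t) ->
      deriv use_sub Lam (G, feq t s)
  | d_trans : forall G s t u, deriv use_sub Lam (G, feq s t) ->
      deriv use_sub Lam (G, feq t u) -> deriv use_sub Lam (G, feq s u)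
  | d_sub : use_sub = true -> forall G psi (s : X -> term),
      deriv use_sub Lam (G, psi) ->
      deriv use_sub Lam (fset_subst s G, fsubst s psi)
  | d_cong : forall G (f : op Sg) (ts ss : 'I_(ar f) -> term),
      (forall i, deriv use_sub Lam (G, feq (ts i) (ss i))) ->
      deriv use_sub Lam (G, feq (tapp ts) (tapp ss))
  | d_inf : forall G t, deriv use_sub Lam (G, fE (fbot H) t)
  | d_mon : forall G (l l' : H) t, deriv use_sub Lam (G, fE l t) ->
      deriv use_sub Lam (G, fE (fmeet l l') t)
  | d_exp : forall G (f : op Sg) (ls : 'I_(ar f) -> H) (ts : 'I_(ar f) -> term),
      (forall i, deriv use_sub Lam (G, fE (ls i) (ts i))) ->
      deriv use_sub Lam (G, fE (fbigmeet ls) (tapp ts))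
  | d_sup : forall G (S : H -> Prop) t,
      (forall l, S l -> deriv use_sub Lam (G, fE l t)) ->
      deriv use_sub Lam (G, fE (fsup S) t)
  | d_fun : forall G t s (l : H), deriv use_sub Lam (G, feq t s) ->
      deriv use_sub Lam (G, fE l t) -> deriv use_sub Lam (G, fE l s).

End Syntax.
Arguments tapp {Sg X} f _.

(* Left to right, each φ ∈ Γ becomes the axiom ∅ ⊢ φ, weakened
   to Δ ⊢ φ and cut against Γ ∪ Δ ⊢ ψ.  Right to left, induction on a
   Sub-free derivation: Γ is carried along as extra hypotheses, the new axioms
   ∅ ⊢ φ become instances of (A), and every other rule commutes with adding
   hypotheses.  (Sub) must be excluded, since it would also substitute into Γ. *)

From mathcomp Require Import all_boot.

Set Implicit Arguments.
Unset Strict Implicit.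

Section Deduction.
Variables (H : frame) (Sg : signature) (X : Type).
Implicit Types (b : bool) (Lam : theory H Sg X) (G D : fset H Sg X)
  (phi psi : formula H Sg X).

Lemma deriv_mono b (Lam1 Lam2 : theory H Sg X) :
  (forall sq, Lam1 sq -> Lam2 sq) ->
  forall sq, deriv b Lam1 sq -> deriv b Lam2 sq.
Proof.
move=> sub12 sq d; induction d.
- by apply: d_ax; apply: sub12.
- exact: d_A.
- exact: d_weak.
- exact: d_cut IHd.
- exact: d_refl.
- exact: d_sym.
- exact: d_trans IHd1 IHd2.
- exact: d_sub.
- exact: d_cong.
- exact: d_inf.
- exact: d_mon.
- exact: d_exp.
- exact: d_sup.
- exact: d_fun IHd1 IHd2.
Qed.

Lemma deriv_subl b Lam G D psi :
  (forall phi, G phi -> D phi) -> deriv b Lam (G, psi) -> deriv b Lam (D, psi).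
Proof. by move=> subGD; apply: d_cut => phi /subGD; apply: d_A. Qed.

Lemma deriv_unionl b Lam G D psi :
  (forall phi, G phi -> deriv b Lam (D, phi)) ->
  deriv b Lam (funion G D, psi) -> deriv b Lam (D, psi).
Proof. by move=> dG; apply: d_cut => phi [/dG | /d_A]. Qed.

Lemma deriv_theory_add_hyp b Lam G D phi :
  G phi -> deriv b (theory_add Lam G) (D, phi).
Proof.
move=> Gphi; apply: (@deriv_subl _ _ (@fempty H Sg X)) => //.
by apply: d_ax; right; exists phi.
Qed.

Lemma deriv_theory_add_of_union b Lam G D psi :
  deriv b Lam (funion G D, psi) -> deriv b (theory_add Lam G) (D, psi).
Proof.
move=> /(@deriv_mono b Lam (theory_add Lam G) (fun sq h => or_introl h)) d.
apply: (deriv_unionl _ d) => phi; exact: deriv_theory_add_hyp.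
Qed.

Lemma deriv_union_of_theory_add b Lam G sq :
  deriv false (theory_add Lam G) sq -> deriv b Lam (funion G sq.1, sq.2).
Proof.
move=> d; induction d => /=.
- case: H0 => [Lsq | [phi Gphi ->]] /=.
  + case: sq Lsq => D psi Lsq; apply: (@deriv_subl _ _ D) => [phi|]; first by right.
    exact: d_ax.
  + by apply: d_A; left.
- by apply: d_A; right.
- by apply: deriv_subl IHd => x [|] ?; [left | right; left].
- by apply: d_cut IHd => phi [Gphi | /H1 //]; apply: d_A; left.
- exact: d_refl.
- exact: d_sym.
- exact: d_trans IHd1 IHd2.
- by [].
- exact: d_cong.
- exact: d_inf.
- exact: d_mon.
- exact: d_exp.
- exact: d_sup.
- exact: d_fun IHd1 IHd2.
Qed.

End Deduction.

Theorem lemma9 (H : frame) (Sg : signature) (X : Type)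
    (Lam : theory H Sg X) (G : fset H Sg X) :
  (forall (D : fset H Sg X) (psi : formula H Sg X),
     deriv true Lam (funion G D, psi) ->
     deriv true (theory_add Lam G) (D, psi)) /\
  (forall (D : fset H Sg X) (psi : formula H Sg X),
     deriv false (theory_add Lam G) (D, psi) ->
     deriv true Lam (funion G D, psi)).
Proof.
split=> D psi; first exact: deriv_theory_add_of_union.
exact: (@deriv_union_of_theory_add _ _ _ true Lam G (D, psi)).
Qed.
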